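(* Let $\mathfrak{C}$ be a verification condition provider. (1) Assume that $\mathrm{trans}^{\preceq}_{\mathrm{dwp}}$ preserves $\mathfrak{C}$ and that $\mathfrak{C}$ yields upper bounds for $\mathrm{dwp}$. Then for all $C,C'\in\mathsf{pGCL}$ and all $f\in\mathbb{E}$: if $\mathrm{vc}^{\mathfrak{C},\mathrm{dwp}}[\![C]\!](f)$ holds and $C'\multimap\mathrm{trans}^{\preceq}_{\mathrm{dwp}}[\![C]\!](f)$, then $$\mathrm{dwp}[\![C]\!](f)\le\mathrm{dwp}[\![C']\!](f)\le\mathrm{dwp}^*[\![C]\!](f).$$ (2) Dually, assume that $\mathrm{trans}^{\succeq}_{\mathrm{awp}}$ preserves $\mathfrak{C}$ and that $\mathfrak{C}$ yields lower bounds for $\mathrm{awp}$. Then for all $C,C'\in\mathsf{pGCL}$ and all $f\in\mathbb{E}$: if $\mathrm{vc}^{\mathfrak{C},\mathrm{awp}}[\![C]\!](f)$ holds and $C'\multimap\mathrm{trans}^{\succeq}_{\mathrm{awp}}[\![C]\!](f)$, then $$\mathrm{awp}[\![C]\!](f)\ge\mathrm{awp}[\![C']\!](f)\ge\mathrm{awp}^*[\![C]\!](f).$$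
   Context: States: fix a countably infinite set of program variables with values in $\mathbb{Q}_{\ge 0}$; a state is a map $\sigma$ from variables to $\mathbb{Q}_{\ge0}$ which is $0$ for all but finitely many variables; $\mathsf{States}$ is the set of states. A predicate is a map $\varphi:\mathsf{States}\to\{\mathsf{true},\mathsf{false}\}$; $\varphi\models\psi$ means every state satisfying $\varphi$ satisfies $\psi$; $\models\varphi$ means $\varphi$ holds in every state; $\varphi\Rightarrow\psi$ is the usual implication. Expectations: $\mathbb{E}$ is the set of maps $\mathsf{States}\to[0,\infty]$, ordered pointwise ($\le$, $\ge$); $+,\cdot$ pointwise with $0\cdot\infty=0$; $\sqcap,\sqcup$ pointwise min/max; $[\varphi]$ Iverson bracket; $(\varphi\to g)(\sigma)=g(\sigma)$ if $\sigma\models\varphi$, else $\infty$; $f[x/E](\sigma)=f(\sigma[x\mapsto E(\sigma)])$. Programs of $\mathsf{pGCL}$: $C ::= \mathtt{skip} \mid x:=E \mid C;C \mid \mathtt{if}\ \varphi_1\to C\ \square\ \varphi_2\to C \mid \{C\}[p]\{C\} \mid \mathtt{while}(\varphi)\{C\}[I]$, where $E:\mathsf{States}\to\mathbb{Q}_{\ge0}$, $p:\mathsf{States}\to[0,1]$, in every guarded choice $\varphi_1\vee\varphi_2$ is valid, and every loop carries an invariant annotation $I\in\mathbb{E}$. Weakest preexpectations for $\mathcal{T}\in\{\mathrm{dwp},\mathrm{awp}\}$: $\mathcal{T}[\![\mathtt{skip}]\!](f)=f$; $\mathcal{T}[\![x:=E]\!](f)=f[x/E]$; $\mathcal{T}[\![C_1;C_2]\!](f)=\mathcal{T}[\![C_1]\!](\mathcal{T}[\![C_2]\!](f))$;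 $\mathrm{dwp}$ of a guarded choice: $(\varphi_1\to\mathrm{dwp}[\![C_1]\!](f))\sqcap(\varphi_2\to\mathrm{dwp}[\![C_2]\!](f))$; $\mathrm{awp}$ of a guarded choice: $[\varphi_1]\cdot\mathrm{awp}[\![C_1]\!](f)\sqcup[\varphi_2]\cdot\mathrm{awp}[\![C_2]\!](f)$; $\mathcal{T}[\![\{C_1\}[p]\{C_2\}]\!](f)=p\cdot\mathcal{T}[\![C_1]\!](f)+(1-p)\cdot\mathcal{T}[\![C_2]\!](f)$; loops: least fixpoint of $g\mapsto[\neg\varphi]\cdot f+[\varphi]\cdot\mathcal{T}[\![C']\!](g)$. The auxiliary transformer $\mathcal{T}^*$ follows the same rules except $\mathcal{T}^*[\![\mathtt{while}(\varphi)\{C'\}[I]]\!](f)=I$. Implementation relation $\multimap$: the smallest partial order on $\mathsf{pGCL}$ closed under: if $C_1'\multimap C_1$, $C_2'\multimap C_2$ then $C_1';C_2'\multimap C_1;C_2$ and $\{C_1'\}[p]\{C_2'\}\multimap\{C_1\}[p]\{C_2\}$; if moreover $\varphi_1'\models\varphi_1$, $\varphi_2'\models\varphi_2$, $\models\varphi_1'\vee\varphi_2'$ then $\mathtt{if}\ \varphi_1'\to C_1'\ \square\ \varphi_2'\to C_2'\multimap\mathtt{if}\ \varphi_1\to C_1\ \square\ \varphi_2\to C_2$; if $C'\multimap C$ then $\mathtt{while}(\varphi)\{C'\}\multimap\mathtt{while}(\varphi)\{C\}$. Verification conditions: a verification condition provider is a map $\mathfrak{C}$ assigning to each annotated loop $\mathtt{while}(\varphi)\{C'\}[I]$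 and each $f\in\mathbb{E}$ a truth value. For $\mathcal{T}\in\{\mathrm{dwp},\mathrm{awp}\}$, $\mathrm{vc}^{\mathfrak{C},\mathcal{T}}[\![C]\!](f)\in\{\mathsf{true},\mathsf{false}\}$ is defined inductively: $\mathsf{true}$ for $\mathtt{skip}$ and assignments; $\mathrm{vc}[\![C_1]\!](\mathcal{T}^*[\![C_2]\!](f))\wedge\mathrm{vc}[\![C_2]\!](f)$ for $C_1;C_2$; $\mathrm{vc}[\![C_1]\!](f)\wedge\mathrm{vc}[\![C_2]\!](f)$ for guarded and probabilistic choices; $\mathfrak{C}(\mathtt{while}(\varphi)\{C'\}[I],f)\wedge\mathrm{vc}[\![C']\!](I)$ for loops. $\mathfrak{C}$ yields upper (resp. lower) bounds for $\mathcal{T}$ if for all $C\in\mathsf{pGCL}$ and $f\in\mathbb{E}$, $\mathrm{vc}^{\mathfrak{C},\mathcal{T}}[\![C]\!](f)$ implies $\mathcal{T}[\![C]\!](f)\le\mathcal{T}^*[\![C]\!](f)$ (resp. $\ge$). Comparison predicates: $f\preceq g$ true at $\sigma$ iff $f(\sigma)\le g(\sigma)$; $f\succeq g$ true at $\sigma$ iff $f(\sigma)\ge g(\sigma)$. Transformer $\mathrm{trans}^{\bowtie}_{\mathcal{T}}$ ($\bowtie\in\{\preceq,\succeq\}$), by induction: $\mathtt{skip}$ and assignments unchanged; $C_1;C_2\mapsto \mathrm{trans}^{\bowtie}_{\mathcal{T}}[\![C_1]\!](\mathcal{T}^*[\![C_2]\!](f));\mathrm{trans}^{\bowtie}_{\mathcal{T}}[\![C_2]\!](f)$;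 $\mathtt{if}\ \varphi_1\to C_1\ \square\ \varphi_2\to C_2\mapsto \mathtt{if}\ \psi_1\to\mathrm{trans}^{\bowtie}_{\mathcal{T}}[\![C_1]\!](f)\ \square\ \psi_2\to\mathrm{trans}^{\bowtie}_{\mathcal{T}}[\![C_2]\!](f)$ with $\psi_1=\varphi_1\wedge(\varphi_2\Rightarrow \mathcal{T}^*[\![C_1]\!](f)\bowtie\mathcal{T}^*[\![C_2]\!](f))$, $\psi_2=\varphi_2\wedge(\varphi_1\Rightarrow \mathcal{T}^*[\![C_2]\!](f)\bowtie\mathcal{T}^*[\![C_1]\!](f))$; $\{C_1\}[p]\{C_2\}\mapsto\{\mathrm{trans}^{\bowtie}_{\mathcal{T}}[\![C_1]\!](f)\}[p]\{\mathrm{trans}^{\bowtie}_{\mathcal{T}}[\![C_2]\!](f)\}$; $\mathtt{while}(\varphi)\{C'\}[I]\mapsto\mathtt{while}(\varphi)\{\mathrm{trans}^{\bowtie}_{\mathcal{T}}[\![C']\!](I)\}[I]$. Preservation: $\mathrm{trans}^{\preceq}_{\mathrm{dwp}}$ preserves $\mathfrak{C}$ if for all $C,C'\in\mathsf{pGCL}$, $f\in\mathbb{E}$: $\mathrm{vc}^{\mathfrak{C},\mathrm{dwp}}[\![C]\!](f)$ and $C'\multimap\mathrm{trans}^{\preceq}_{\mathrm{dwp}}[\![C]\!](f)$ imply $\mathrm{vc}^{\mathfrak{C},\mathrm{dwp}}[\![C']\!](f)$; analogously $\mathrm{trans}^{\succeq}_{\mathrm{awp}}$ preserves $\mathfrak{C}$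 with $\mathrm{awp}$ in place of $\mathrm{dwp}$. *)

From HB Require Import structures.
From mathcomp Require Import all_boot all_order all_algebra.
From mathcomp Require Import all_classical all_reals ereal.
Set Implicit Arguments. Unset Strict Implicit. Unset Printing Implicit Defensive.
Import Order.TTheory GRing.Theory Num.Theory.
Local Open Scope classical_set_scope.
Local Open Scope ring_scope.

Record state := State {
  sval :> nat -> rat ;
  sval_ge0 : forall x, 0 <= sval x ;
  sval_fin : exists n, forall x, (n <= x)%N -> sval x = 0 }.

Record aexp := AExp { aeval :> state -> rat ; aeval_ge0 : forall s, 0 <= aeval s }.

Definition pred_st := state -> bool.

Definition upd_fun (s : state) (x : nat) (v : rat) : nat -> rat :=
  fun y => if y == x then v else s y.

Lemma upd_ge0 (s : state) x v : 0 <= v -> forall y, 0 <= upd_fun s x v y.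
Proof. by move=> v0 y; rewrite /upd_fun; case: ifP => // _; exact: sval_ge0. Qed.

Lemma upd_fin (s : state) x v : exists n, forall y, (n <= y)%N -> upd_fun s x v y = 0.
Proof.
case: (sval_fin s) => n Hn; exists (maxn n x.+1) => y; rewrite geq_max => /andP[ny xy].
rewrite /upd_fun; case: eqP => [eyx|_]; last exact: Hn.
by move: xy; rewrite eyx ltnn.
Qed.

Definition upd (s : state) (x : nat) (E : aexp) : state :=
  @State (upd_fun s x (E s)) (upd_ge0 s x (aeval_ge0 E s)) (upd_fin s x (E s)).

Section pGCL.
Variable R : realType.
Local Open Scope ereal_scope.

Record prob := Prob { peval :> state -> R ;
  peval_ge0 : forall s, (0 <= peval s)%R ; peval_le1 : forall s, (peval s <= 1)%R }.

Record expect := Expect { ev :> state -> \bar R ; ev_ge0 : forall s, 0 <= ev s }.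

Definition exp_le (f g : expect) : Prop := forall s, f s <= g s.

Definition iv (b : bool) : \bar R := if b then 1 else 0.

Lemma iv_ge0 b : 0 <= iv b. Proof. by case: b. Qed.

Definition e_subst (f : expect) (x : nat) (E : aexp) : expect :=
  @Expect (fun s => f (upd s x E)) (fun s => ev_ge0 f _).

Lemma e_dmin_ge0 (p1 p2 : pred_st) (g1 g2 : expect) s :
  0 <= Order.min (if p1 s then g1 s else +oo) (if p2 s then g2 s else +oo).
Proof.
by rewrite le_min; apply/andP; split; [case: (p1 s)|case: (p2 s)]; rewrite ?leey ?ev_ge0.
Qed.
Definition e_dmin (p1 p2 : pred_st) (g1 g2 : expect) : expect :=
  @Expect (fun s => Order.min (if p1 s then g1 s else +oo) (if p2 s then g2 s else +oo))
          (e_dmin_ge0 p1 p2 g1 g2).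

Lemma e_amax_ge0 (p1 p2 : pred_st) (g1 g2 : expect) s :
  0 <= Order.max (iv (p1 s) * g1 s) (iv (p2 s) * g2 s).
Proof. by rewrite le_max mule_ge0 ?iv_ge0 ?ev_ge0. Qed.
Definition e_amax (p1 p2 : pred_st) (g1 g2 : expect) : expect :=
  @Expect (fun s => Order.max (iv (p1 s) * g1 s) (iv (p2 s) * g2 s))
          (e_amax_ge0 p1 p2 g1 g2).

Lemma e_pchoice_ge0 (p : prob) (g1 g2 : expect) s :
  0 <= (p s)%:E * g1 s + (1 - p s)%R%:E * g2 s.
Proof.
apply: adde_ge0; apply: mule_ge0; rewrite ?ev_ge0 ?lee_fin ?peval_ge0 //.
by rewrite subr_ge0 peval_le1.
Qed.
Definition e_pchoice (p : prob) (g1 g2 : expect) : expect :=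
  @Expect (fun s => (p s)%:E * g1 s + (1 - p s)%R%:E * g2 s) (e_pchoice_ge0 p g1 g2).

Lemma e_loopstep_ge0 (phi : pred_st) (f g : expect) s :
  0 <= iv (~~ phi s) * f s + iv (phi s) * g s.
Proof. by rewrite adde_ge0 // mule_ge0 ?iv_ge0 ?ev_ge0. Qed.
Definition e_loopstep (phi : pred_st) (f g : expect) : expect :=
  @Expect (fun s => iv (~~ phi s) * f s + iv (phi s) * g s) (e_loopstep_ge0 phi f g).

Lemma lfp_ge0 (Phi : expect -> expect) s :
  0 <= ereal_inf [set (g : expect) s | g in [set g | exp_le (Phi g) g]].
Proof. by apply: le_ereal_inf_tmp => _ [g _ <-]; exact: ev_ge0. Qed.
Definition lfp (Phi : expect -> expect) : expect :=
  @Expect (fun s => ereal_inf [set (g : expect) s | g in [set g | exp_le (Phi g) g]])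
          (lfp_ge0 Phi).

Inductive prog :=
| Skip
| Assign of nat & aexp
| Seq of prog & prog
| If (phi1 phi2 : pred_st) of (forall s, phi1 s || phi2 s) & prog & prog
| PChoice of prog & prob & prog
| While of pred_st & prog & expect.              (* while(phi){C'}[I] *)

Inductive mode := Dwp | Awp.

Fixpoint wp (m : mode) (C : prog) (f : expect) : expect :=
  match C with
  | Skip => f
  | Assign x E => e_subst f x E
  | Seq C1 C2 => wp m C1 (wp m C2 f)
  | If p1 p2 _ C1 C2 =>
      match m with
      | Dwp => e_dmin p1 p2 (wp m C1 f) (wp m C2 f)
      | Awp => e_amax p1 p2 (wp m C1 f) (wp m C2 f)
      end
  | PChoice C1 p C2 => e_pchoice p (wp m C1 f) (wp m C2 f)
  | While phi C' Inv => lfp (fun g => e_loopstep phi f (wp m C' g))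
  end.

Fixpoint wpstar (m : mode) (C : prog) (f : expect) : expect :=
  match C with
  | Skip => f
  | Assign x E => e_subst f x E
  | Seq C1 C2 => wpstar m C1 (wpstar m C2 f)
  | If p1 p2 _ C1 C2 =>
      match m with
      | Dwp => e_dmin p1 p2 (wpstar m C1 f) (wpstar m C2 f)
      | Awp => e_amax p1 p2 (wpstar m C1 f) (wpstar m C2 f)
      end
  | PChoice C1 p C2 => e_pchoice p (wpstar m C1 f) (wpstar m C2 f)
  | While phi C' Inv => Inv
  end.

Definition dwp := wp Dwp.
Definition awp := wp Awp.
Definition dwpstar := wpstar Dwp.
Definition awpstar := wpstar Awp.

Inductive impl : prog -> prog -> Prop :=
| impl_refl C : impl C C
| impl_trans C1 C2 C3 : impl C1 C2 -> impl C2 C3 -> impl C1 C3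
| impl_seq C1' C2' C1 C2 : impl C1' C1 -> impl C2' C2 -> impl (Seq C1' C2') (Seq C1 C2)
| impl_pchoice C1' C2' C1 C2 p :
    impl C1' C1 -> impl C2' C2 -> impl (PChoice C1' p C2') (PChoice C1 p C2)
| impl_if C1' C2' C1 C2 (p1' p2' p1 p2 : pred_st) H' H :
    impl C1' C1 -> impl C2' C2 ->
    (forall s, p1' s -> p1 s) -> (forall s, p2' s -> p2 s) ->
    (forall s, p1' s || p2' s) ->
    impl (@If p1' p2' H' C1' C2') (@If p1 p2 H C1 C2)
| impl_while (phi : pred_st) C' C (Inv : expect) :
    impl C' C -> impl (While phi C' Inv) (While phi C Inv).

Definition vcprov := pred_st -> prog -> expect -> expect -> Prop.
(* vcp phi C' I f  =  C(while(phi){C'}[I], f) *)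

Fixpoint vc (vcp : vcprov) (m : mode) (C : prog) (f : expect) : Prop :=
  match C with
  | Skip => True
  | Assign _ _ => True
  | Seq C1 C2 => vc vcp m C1 (wpstar m C2 f) /\ vc vcp m C2 f
  | If _ _ _ C1 C2 => vc vcp m C1 f /\ vc vcp m C2 f
  | PChoice C1 _ C2 => vc vcp m C1 f /\ vc vcp m C2 f
  | While phi C' Inv => vcp phi C' Inv f /\ vc vcp m C' Inv
  end.

Definition yields_upper (vcp : vcprov) (m : mode) : Prop :=
  forall C f, vc vcp m C f -> exp_le (wp m C f) (wpstar m C f).

Definition yields_lower (vcp : vcprov) (m : mode) : Prop :=
  forall C f, vc vcp m C f -> exp_le (wpstar m C f) (wp m C f).

Definition cmp (dir : bool) (a b : \bar R) : bool := if dir then a <= b else b <= a.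

Definition psi1 (dir : bool) (p1 p2 : pred_st) (a b : expect) : pred_st :=
  fun s => p1 s && (p2 s ==> cmp dir (a s) (b s)).
Definition psi2 (dir : bool) (p1 p2 : pred_st) (a b : expect) : pred_st :=
  fun s => p2 s && (p1 s ==> cmp dir (b s) (a s)).

Lemma psi_cover dir (p1 p2 : pred_st) (H : forall s, p1 s || p2 s) (a b : expect) s :
  psi1 dir p1 p2 a b s || psi2 dir p1 p2 a b s.
Proof.
rewrite /psi1 /psi2 /cmp; move: (H s).
case: (p1 s); case: (p2 s) => //= _; case: dir => //=.
- by case: (leP (a s) (b s)) => // /ltW ->; rewrite orbT.
- by case: (leP (b s) (a s)) => // /ltW ->; rewrite orbT.
Qed.

Fixpoint trans (m : mode) (dir : bool) (C : prog) (f : expect) : prog :=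
  match C with
  | Skip => Skip
  | Assign x E => Assign x E
  | Seq C1 C2 => Seq (trans m dir C1 (wpstar m C2 f)) (trans m dir C2 f)
  | If p1 p2 H C1 C2 =>
      @If (psi1 dir p1 p2 (wpstar m C1 f) (wpstar m C2 f))
          (psi2 dir p1 p2 (wpstar m C1 f) (wpstar m C2 f))
          (psi_cover dir H (wpstar m C1 f) (wpstar m C2 f))
          (trans m dir C1 f) (trans m dir C2 f)
  | PChoice C1 p C2 => PChoice (trans m dir C1 f) p (trans m dir C2 f)
  | While phi C' Inv => While phi (trans m dir C' Inv) Inv
  end.

Definition trans_dwp := trans Dwp true.
Definition trans_awp := trans Awp false.

Definition preserves (vcp : vcprov) (m : mode) (tr : prog -> expect -> prog) : Prop :=
  forall C C' f, vc vcp m C f -> impl C' (tr C f) -> vc vcp m C' f.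

End pGCL.

(* An implementation only strengthens guards, which can only raise the demonic
   minimum (resp. lower the angelic maximum); this gives the outer inequality
   for C' -o trans C -o C. For the inner one, the guards psi1, psi2 of
   [trans] select a branch that realizes the minimum (resp. maximum) of the
   auxiliary transformer, so any C' implementing [trans C] has an auxiliary
   preexpectation at least as good as that of C, while the preserved
   verification conditions bound the weakest preexpectation of C' by its own
   auxiliary one. *)
From mathcomp Require Import all_boot all_order all_algebra.
From mathcomp Require Import all_classical all_reals ereal.
Set Implicit Arguments. Unset Strict Implicit. Unset Printing Implicit Defensive.
Import Order.TTheory GRing.Theory Num.Theory.
Local Open Scope ereal_scope.

Section Refinement.
Variable R : realType.
Implicit Types (m : mode) (p q phi : pred_st) (f g : expect R) (C : prog R).

(* The direction in which implementations move preexpectations: upwards for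
   the demonic transformer, downwards for the angelic one. *)
Definition mode_le m (a b : \bar R) : bool := if m is Dwp then a <= b else b <= a.

Definition mode_exp_le m f g : Prop := forall s, mode_le m (f s) (g s).

Definition mode_dir m : bool := if m is Dwp then true else false.

(* Both [yields_upper vcp Dwp] and [yields_lower vcp Awp] unfold to this. *)
Definition vc_sound (vcp : vcprov R) m : Prop :=
  forall C f, vc vcp m C f -> mode_exp_le m (wp m C f) (wpstar m C f).

Definition e_choice m p1 p2 f1 f2 : expect R :=
  match m with Dwp => e_dmin p1 p2 f1 f2 | Awp => e_amax p1 p2 f1 f2 end.

Lemma mode_lexx m a : mode_le m a a.
Proof. by case: m => /=. Qed.

Lemma mode_le_trans m a b c : mode_le m a b -> mode_le m b c -> mode_le m a c.
Proof. by case: m => /= [ab bc|ba cb]; [exact: le_trans ab bc|exact: le_trans cb ba]. Qed.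

Lemma ivM (b : bool) (x : \bar R) : iv R b * x = if b then x else 0.
Proof. by case: b; rewrite /iv ?mul1e ?mul0e. Qed.

Lemma e_choice_le m p1 p2 q1 q2 f1 f2 g1 g2 s :
  (q1 s -> p1 s) -> (q2 s -> p2 s) ->
  (q1 s -> mode_le m (f1 s) (g1 s)) -> (q2 s -> mode_le m (f2 s) (g2 s)) ->
  mode_le m (e_choice m p1 p2 f1 f2 s) (e_choice m q1 q2 g1 g2 s).
Proof.
move=> qp1 qp2 fg1 fg2; case: m fg1 fg2 => /= fg1 fg2.
- apply: le_min2.
  + by case: (boolP (q1 s)) => [/[dup] /qp1 -> /fg1 //|_]; rewrite leey.
  + by case: (boolP (q2 s)) => [/[dup] /qp2 -> /fg2 //|_]; rewrite leey.
- rewrite !ivM; apply: le_max2.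
  + case: (boolP (q1 s)) => [/[dup] /qp1 -> /fg1 //|_].
    by case: (p1 s); rewrite ?ev_ge0.
  + case: (boolP (q2 s)) => [/[dup] /qp2 -> /fg2 //|_].
    by case: (p2 s); rewrite ?ev_ge0.
Qed.

Lemma e_choice_le_l m p1 p2 f1 f2 s :
  p1 s -> mode_le m (e_choice m p1 p2 f1 f2 s) (f1 s).
Proof. by case: m => /= ->; rewrite ?ge_min ?le_max ?ivM lexx. Qed.

Lemma e_choice_le_r m p1 p2 f1 f2 s :
  p2 s -> mode_le m (e_choice m p1 p2 f1 f2 s) (f2 s).
Proof. by case: m => /= ->; rewrite ?ge_min ?le_max ?ivM lexx ?orbT. Qed.

Lemma e_choice_psi1 m p1 p2 f1 f2 s :
  psi1 (mode_dir m) p1 p2 f1 f2 s -> e_choice m p1 p2 f1 f2 s = f1 s.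
Proof.
rewrite /psi1 /cmp; case: m => /= /andP[-> /implyP le12]; rewrite ?ivM;
  case: (p2 s) le12 => [le12|_].
- exact/min_idPl/le12.
- exact/min_idPl/leey.
- exact/max_idPl/le12.
- exact/max_idPl/ev_ge0.
Qed.

Lemma e_choice_psi2 m p1 p2 f1 f2 s :
  psi2 (mode_dir m) p1 p2 f1 f2 s -> e_choice m p1 p2 f1 f2 s = f2 s.
Proof.
rewrite /psi2 /cmp; case: m => /= /andP[-> /implyP le21]; rewrite ?ivM;
  case: (p1 s) le21 => [le21|_].
- exact/min_idPr/le21.
- exact/min_idPr/leey.
- exact/max_idPr/le21.
- exact/max_idPr/ev_ge0.
Qed.

Lemma e_choice_psi_le m p1 p2 q1 q2 f1 f2 g1 g2 s :
  q1 s || q2 s ->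
  (q1 s -> psi1 (mode_dir m) p1 p2 f1 f2 s) -> (q2 s -> psi2 (mode_dir m) p1 p2 f1 f2 s) ->
  mode_le m (g1 s) (f1 s) -> mode_le m (g2 s) (f2 s) ->
  mode_le m (e_choice m q1 q2 g1 g2 s) (e_choice m p1 p2 f1 f2 s).
Proof.
move=> /orP[q1s|q2s] q_psi1 q_psi2 le1 le2.
- rewrite (e_choice_psi1 (q_psi1 q1s)).
  exact: mode_le_trans (e_choice_le_l _ _ _ _ q1s) le1.
- rewrite (e_choice_psi2 (q_psi2 q2s)).
  exact: mode_le_trans (e_choice_le_r _ _ _ _ q2s) le2.
Qed.

Lemma e_pchoice_le m (pr : prob R) f1 f2 g1 g2 s :
  mode_le m (f1 s) (g1 s) -> mode_le m (f2 s) (g2 s) ->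
  mode_le m (e_pchoice pr f1 f2 s) (e_pchoice pr g1 g2 s).
Proof.
have p_ge0 : (0 <= (pr s)%:E) && (0 <= (1 - pr s)%R%:E).
  by rewrite !lee_fin peval_ge0 subr_ge0 peval_le1.
case/andP: p_ge0 => p0 q0; case: m => /= le1 le2; apply: leeD; exact: lee_wpmul2l.
Qed.

Lemma lfp_le (Phi Psi : expect R -> expect R) :
  (forall g, exp_le (Phi g) (Psi g)) -> exp_le (lfp Phi) (lfp Psi).
Proof.
move=> le_PhiPsi s /=; apply: ereal_inf_le_tmp => _ [g Hg <-]; exists g => //.
by move=> t; apply: le_trans (Hg t); apply: le_PhiPsi.
Qed.

Lemma e_loopstep_le phi f1 f2 g1 g2 :
  exp_le f1 f2 -> exp_le g1 g2 -> exp_le (e_loopstep phi f1 g1) (e_loopstep phi f2 g2).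
Proof. by move=> le_f le_g s /=; rewrite !ivM; case: (phi s); rewrite /= ?add0e ?adde0. Qed.

Lemma lfp_loopstep_le m phi f g (B B' : expect R -> expect R) :
  mode_exp_le m f g -> (forall h, mode_exp_le m (B h) (B' h)) ->
  mode_exp_le m (lfp (fun h => e_loopstep phi f (B h)))
                (lfp (fun h => e_loopstep phi g (B' h))).
Proof.
by rewrite /mode_exp_le; case: m => /= le_fg le_B;
  apply: lfp_le => h; apply: e_loopstep_le => // s; apply: le_B.
Qed.

Lemma wp_mono m C f g : mode_exp_le m f g -> mode_exp_le m (wp m C f) (wp m C g).
Proof.
elim: C f g => [|x E|C1 IH1 C2 IH2|p1 p2 H C1 IH1 C2 IH2|C1 IH1 p C2 IH2|phi C IH Inv]
  f g le_fg //=.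
- by move=> s; exact: le_fg.
- by apply: IH1; apply: IH2.
- by move=> s; apply: e_choice_le => // _; [apply: IH1|apply: IH2].
- by move=> s; apply: e_pchoice_le; [apply: IH1|apply: IH2].
- by apply: lfp_loopstep_le => // h s; apply: mode_lexx.
Qed.

Lemma wpstar_mono m C f g :
  mode_exp_le m f g -> mode_exp_le m (wpstar m C f) (wpstar m C g).
Proof.
elim: C f g => [|x E|C1 IH1 C2 IH2|p1 p2 H C1 IH1 C2 IH2|C1 IH1 p C2 IH2|phi C IH Inv]
  f g le_fg //=.
- by move=> s; exact: le_fg.
- by apply: IH1; apply: IH2.
- by move=> s; apply: e_choice_le => // _; [apply: IH1|apply: IH2].
- by move=> s; apply: e_pchoice_le; [apply: IH1|apply: IH2].
- by move=> s; apply: mode_lexx.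
Qed.

Lemma wp_impl m C' C : impl C' C -> forall f, mode_exp_le m (wp m C f) (wp m C' f).
Proof.
elim=> {C' C} /=.
- by move=> C f s; apply: mode_lexx.
- by move=> C1 C2 C3 _ IH12 _ IH23 f s; apply: mode_le_trans (IH23 f s) (IH12 f s).
- move=> C1' C2' C1 C2 _ IH1 _ IH2 f s.
  exact: mode_le_trans (wp_mono C1 (IH2 f) s) (IH1 _ s).
- by move=> C1' C2' C1 C2 p _ IH1 _ IH2 f s; apply: e_pchoice_le; [apply: IH1|apply: IH2].
- by move=> C1' C2' C1 C2 p1' p2' p1 p2 _ _ _ IH1 _ IH2 sub1 sub2 _ f s;
    apply: e_choice_le (sub1 s) (sub2 s) _ _ => _; [apply: IH1|apply: IH2].
- by move=> phi C' C Inv _ IH f; apply: lfp_loopstep_le => // s; apply: mode_lexx.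
Qed.

Lemma trans_impl m d C f : impl (trans m d C f) C.
Proof.
elim: C f => [|x E|C1 IH1 C2 IH2|p1 p2 H C1 IH1 C2 IH2|C1 IH1 p C2 IH2|phi C IH Inv] f /=.
- exact: impl_refl.
- exact: impl_refl.
- exact: impl_seq.
- by apply: impl_if => // [s /andP[]|s /andP[]|s]; rewrite // psi_cover.
- exact: impl_pchoice.
- exact: impl_while.
Qed.

(* [impl] unfolded into a structural relation (same skeleton, pointwise
   stronger guards), which unlike [impl] can be inverted by case analysis. *)
Fixpoint struct_impl (A B : prog R) : Prop :=
  match A, B with
  | Skip, Skip => True
  | Assign x E, Assign y F => x = y /\ E = F
  | Seq A1 A2, Seq B1 B2 => struct_impl A1 B1 /\ struct_impl A2 B2
  | If p1' p2' _ A1 A2, If p1 p2 _ B1 B2 =>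
      [/\ struct_impl A1 B1, struct_impl A2 B2,
          forall s, p1' s -> p1 s & forall s, p2' s -> p2 s]
  | PChoice A1 p A2, PChoice B1 q B2 => [/\ p = q, struct_impl A1 B1 & struct_impl A2 B2]
  | While phi A' InvA, While psi B' InvB => [/\ phi = psi, InvA = InvB & struct_impl A' B']
  | _, _ => False
  end.

Lemma struct_impl_refl C : struct_impl C C.
Proof. by elim: C => //=. Qed.

Lemma struct_impl_trans A B C : struct_impl A B -> struct_impl B C -> struct_impl A C.
Proof.
elim: A B C => [|x E|A1 IH1 A2 IH2|p1 p2 H A1 IH1 A2 IH2|A1 IH1 p A2 IH2|phi A IH Inv]
  [|y F|B1 B2|q1 q2 H' B1 B2|B1 q B2|psi B J] //
  [|z G|C1 C2|r1 r2 H'' C1 C2|C1 r C2|chi C K] //=.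
- by move=> [-> ->] [-> ->].
- by move=> [AB1 AB2] [BC1 BC2]; split; [exact: IH1 BC1|exact: IH2 BC2].
- move=> [AB1 AB2 pq1 pq2] [BC1 BC2 qr1 qr2].
  by split; [exact: IH1 BC1|exact: IH2 BC2|move=> s /pq1/qr1|move=> s /pq2/qr2].
- by move=> [-> AB1 AB2] [-> BC1 BC2]; split; [|exact: IH1 BC1|exact: IH2 BC2].
- by move=> [-> -> AB] [-> -> BC]; split => //; exact: IH BC.
Qed.

Lemma impl_struct_impl A B : impl A B -> struct_impl A B.
Proof.
elim=> {A B} //=.
- exact: struct_impl_refl.
- by move=> C1 C2 C3 _ h12 _ h23; exact: struct_impl_trans h23.
Qed.

Lemma wpstar_trans m C C' f :
  struct_impl C' (trans m (mode_dir m) C f) -> mode_exp_le m (wpstar m C' f) (wpstar m C f).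
Proof.
elim: C C' f => [|x E|C1 IH1 C2 IH2|p1 p2 H C1 IH1 C2 IH2|C1 IH1 p C2 IH2|phi C IH Inv]
  [|y F|C1' C2'|q1 q2 H' C1' C2'|C1' q C2'|psi C' J] f //=.
- by move=> _ s; apply: mode_lexx.
- by move=> [-> ->] s; apply: mode_lexx.
- move=> [sub1 sub2] s.
  exact: mode_le_trans (wpstar_mono C1' (IH2 _ _ sub2) s) (IH1 _ _ sub1 s).
- move=> [sub1 sub2 q_psi1 q_psi2] s.
  by apply: e_choice_psi_le (H' s) (q_psi1 s) (q_psi2 s) _ _; [apply: IH1|apply: IH2].
- by move=> [<- sub1 sub2] s; apply: e_pchoice_le; [apply: IH1|apply: IH2].
- by move=> [_ -> _] s; apply: mode_lexx.
Qed.

Lemma wp_trans_bounds (vcp : vcprov R) m :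
  preserves vcp m (trans m (mode_dir m)) -> vc_sound vcp m ->
  forall C C' f, vc vcp m C f -> impl C' (trans m (mode_dir m) C f) ->
    mode_exp_le m (wp m C f) (wp m C' f) /\ mode_exp_le m (wp m C' f) (wpstar m C f).
Proof.
move=> pres sound C C' f vcC C'_impl; split.
- exact/wp_impl/(impl_trans C'_impl)/trans_impl.
- move=> s; apply: mode_le_trans (sound _ _ (pres _ _ _ vcC C'_impl) s) _.
  exact/wpstar_trans/impl_struct_impl.
Qed.

End Refinement.

Theorem theorem6p5 (R : realType) (vcp : vcprov R) :
  (preserves vcp Dwp (@trans_dwp R) -> yields_upper vcp Dwp ->
   forall (C C' : prog R) (f : expect R),
     vc vcp Dwp C f -> impl C' (trans_dwp C f) ->
     exp_le (dwp C f) (dwp C' f) /\ exp_le (dwp C' f) (dwpstar C f))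
  /\
  (preserves vcp Awp (@trans_awp R) -> yields_lower vcp Awp ->
   forall (C C' : prog R) (f : expect R),
     vc vcp Awp C f -> impl C' (trans_awp C f) ->
     exp_le (awp C' f) (awp C f) /\ exp_le (awpstar C f) (awp C' f)).
Proof. by split; [exact: (@wp_trans_bounds R vcp Dwp)|exact: (@wp_trans_bounds R vcp Awp)]. Qed.
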